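(* Let $G$ be a minimal graph in $\mathcal{H}_e(3,3)$. Then for every vertex $v$ of $G$ we have $\alpha(G(v))\le d(v)-3$.
   Context: All graphs are finite, simple and undirected. $\alpha(H)$ is the independence number of $H$, $d(v)$ is the degree of $v$, and $G(v)$ is the subgraph of $G$ induced by the set of neighbors of $v$. Write $G \overset{e}{\rightarrow}(3,3)$ if every coloring of the edges of $G$ with two colors contains a monochromatic triangle; $\mathcal{H}_e(3,3)$ is the class of such graphs. $G$ is a minimal graph in $\mathcal{H}_e(3,3)$ if $G \overset{e}{\rightarrow}(3,3)$ and no proper subgraph $H$ of $G$ satisfies $H \overset{e}{\rightarrow}(3,3)$. *)

From mathcomp Require Import all_boot.
Set Implicit Arguments. Unset Strict Implicit. Unset Printing Implicit Defensive.

Definition simple_graph (T : finType) (e : rel T) : Prop :=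
  (forall x, ~~ e x x) /\ (forall x y, e x y = e y x).

(* A 2-colouring of the edges: a symmetric function on pairs (its values
   on non-edges are irrelevant). *)
Definition edge_coloring (T : finType) (c : T -> T -> bool) : Prop :=
  forall x y, c x y = c y x.

Definition arrows33 (T : finType) (e : rel T) : Prop :=
  forall c : T -> T -> bool, edge_coloring c ->
    exists x y z, [/\ e x y, e y z & e x z] /\ c x y = c y z /\ c x y = c x z.

Definition subgraph (T : finType) (e : rel T) (V : {set T}) (f : rel T) : Prop :=
  (forall x y, f x y = f y x) /\
  (forall x y, f x y -> e x y) /\
  (forall x y, f x y -> x \in V /\ y \in V).

Definition proper_subgraph (T : finType) (e : rel T) (V : {set T}) (f : rel T) : Prop :=
  subgraph e V f /\ (V != setT \/ exists x y, f x y <> e x y).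

(* Since a triangle of (V, f) only uses edges of f, "(V,f) -e-> (3,3)" is
   arrows33 f. *)
Definition minimal_arrows33 (T : finType) (e : rel T) : Prop :=
  arrows33 e /\ forall V f, proper_subgraph e V f -> ~ arrows33 f.

Definition nbhd (T : finType) (e : rel T) (v : T) : {set T} := [set u | e v u].

Definition deg (T : finType) (e : rel T) (v : T) : nat := #|nbhd e v|.

Definition independent (T : finType) (e : rel T) (S : {set T}) : bool :=
  [forall x in S, forall y in S, ~~ e x y].

Definition alpha_nbhd (T : finType) (e : rel T) (v : T) : nat :=
  \max_(S : {set T} | (S \subset nbhd e v) && independent e S) #|S|.

From mathcomp Require Import all_boot.
From mathcomp Require Import zify.
Set Implicit Arguments. Unset Strict Implicit. Unset Printing Implicit Defensive.

(* Suppose S is an independent set in N(v) with |N(v) \ S| <= 2.  Colour the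
   graph G - v, a proper subgraph, without monochromatic triangles, and colour
   each edge vu by a colour depending only on whether u lies in S: one colour
   k on N(v) \ S, the other on S.  A triangle vxy then has x, y not both in S;
   if exactly one of them is in S its two edges at v differ, and if neither is,
   then {x, y} = N(v) \ S and choosing k opposite to the colour of xy breaks it.
   So G would not arrow (3,3); hence |N(v) \ S| >= 3 for every independent S. *)

Definition mono_triangle (T : finType) (e : rel T) (c : T -> T -> bool) : Prop :=
  exists x y z, [/\ e x y, e y z & e x z] /\ c x y = c y z /\ c x y = c x z.

Definition del_vertex (T : finType) (e : rel T) (v : T) : rel T :=
  fun x y => [&& e x y, x != v & y != v].

Definition extend_coloring (T : finType) (c : T -> T -> bool) (v : T) (g : T -> bool) :
    T -> T -> bool :=
  fun x y => if x == v then g y else if y == v then g x else c x y.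

Definition apex_mono_free (T : finType) (e : rel T) (c : T -> T -> bool) (v : T)
    (g : T -> bool) : Prop :=
  forall x y, e v x -> e v y -> e x y -> ~ (g x = g y /\ g x = c x y).

Lemma card_le2_pair (T : finType) (B : {set T}) x y :
  #|B| <= 2 -> x \in B -> y \in B -> x != y -> B = [set x; y].
Proof.
move=> B_le2 xB yB xy; apply/esym/eqP.
by rewrite eqEcard cards2 xy B_le2 andbT subUset !sub1set xB yB.
Qed.

Section VertexDeletion.

Variables (T : finType) (e : rel T).
Hypotheses (e_irr : forall x, ~~ e x x) (e_sym : symmetric e).

Lemma proper_subgraph_del_vertex v : proper_subgraph e [set~ v] (del_vertex e v).
Proof.
split; last by left; apply/eqP => /setP /(_ v); rewrite !inE eqxx.
split; [|split].
- by move=> x y; rewrite /del_vertex e_sym; congr (_ && _); exact: andbC.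
- by move=> x y /andP [].
- by move=> x y /and3P [_ xv yv]; rewrite !inE xv yv.
Qed.

Lemma edge_coloring_extend (c : T -> T -> bool) v (g : T -> bool) :
  edge_coloring c -> edge_coloring (extend_coloring c v g).
Proof.
move=> c_sym x y; rewrite /extend_coloring (c_sym x y).
case: (eqVneq x v) => [xv|_]; case: (eqVneq y v) => [yv|_] //.
by rewrite xv yv.
Qed.

Lemma mono_triangle_extend (c : T -> T -> bool) v (g : T -> bool) :
  apex_mono_free e c v g -> mono_triangle e (extend_coloring c v g) ->
  mono_triangle (del_vertex e v) c.
Proof.
move=> g_ok [x [y [z [[exy eyz exz] [cxy_yz cxy_xz]]]]].
have neq_v u : e v u -> (u == v) = false.
  by move=> evu; apply/negbTE; apply: contraTneq evu => ->.
move: cxy_yz cxy_xz; rewrite /extend_coloring.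
case: (eqVneq x v) => [xv|xv].
  subst x; rewrite (neq_v _ exy) (neq_v _ exz) => gy_cyz gy_gz.
  by case: (g_ok y z exy exz eyz).
case: (eqVneq y v) => [yv|yv].
  subst y; rewrite (neq_v _ eyz) => gx_gz gx_cxz.
  by case: (g_ok x z _ eyz exz); rewrite 1?e_sym.
case: (eqVneq z v) => [zv|zv].
  subst z => cxy_gy cxy_gx.
  by case: (g_ok x y _ _ exy); rewrite 1?e_sym // -cxy_gx -cxy_gy.
move=> cxy_yz cxy_xz; exists x, y, z.
by rewrite /del_vertex exy eyz exz xv yv zv.
Qed.

Lemma opposite_color_card_le2 (B : {set T}) (c : T -> T -> bool) :
  edge_coloring c -> #|B| <= 2 ->
  exists k, forall x y, x \in B -> y \in B -> e x y -> k = ~~ c x y.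
Proof.
move=> c_sym B_le2.
case: (pickP [pred p : T * T | [&& p.1 \in B, p.2 \in B & e p.1 p.2]]) => [[p q]|no_edge].
  move=> /and3P [/= pB qB epq]; exists (~~ c p q) => x y xB yB exy.
  have pq : p != q by apply: contraTneq epq => ->.
  have xy : x != y by apply: contraTneq exy => ->.
  have B_pq := card_le2_pair B_le2 pB qB pq.
  move: xB yB xy; rewrite B_pq !inE.
  by case/orP=> /eqP->; case/orP=> /eqP->; rewrite ?eqxx // c_sym.
by exists true => x y xB yB exy; move: (no_edge (x, y)); rewrite /= xB yB exy.
Qed.

Lemma apex_mono_free_exists v (S : {set T}) (c : T -> T -> bool) :
  edge_coloring c -> independent e S -> #|nbhd e v :\: S| <= 2 ->
  exists g, apex_mono_free e c v g.
Proof.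
move=> c_sym S_ind B_le2.
have [k Hk] := opposite_color_card_le2 c_sym B_le2.
exists (fun u => if u \in S then ~~ k else k) => x y evx evy exy.
case xS: (x \in S); case yS: (y \in S); try by move=> [+ _]; case: (k).
  by move/forall_inP: S_ind => /(_ x xS) /forall_inP /(_ y yS); rewrite exy.
by rewrite (Hk x y) ?inE ?xS ?yS ?evx ?evy // => -[_]; case: (c x y).
Qed.

Lemma minimal_arrows33_nbhd_indep v (S : {set T}) :
  minimal_arrows33 e -> independent e S -> 2 < #|nbhd e v :\: S|.
Proof.
move=> [arrows minimal] S_ind; rewrite ltnNge; apply/negP => B_le2.
apply: (minimal _ _ (proper_subgraph_del_vertex v)) => c c_sym.
have [g g_ok] := apex_mono_free_exists c_sym S_ind B_le2.
exact: mono_triangle_extend g_ok (arrows _ (edge_coloring_extend v g c_sym)).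
Qed.

End VertexDeletion.

Lemma alpha_nbhd_attained (T : finType) (e : rel T) v :
  exists2 S : {set T}, (S \subset nbhd e v) && independent e S & #|S| = alpha_nbhd e v.
Proof.
have nonempty : 0 < #|[pred S : {set T} | (S \subset nbhd e v) && independent e S]|.
  by apply/card_gt0P; exists set0; rewrite inE sub0set; apply/forall_inP => x; rewrite inE.
rewrite /alpha_nbhd; have [S S_ok ->] := eq_bigmax_cond (fun S : {set T} => #|S|) nonempty.
by exists S.
Qed.

Theorem theorem8p6 (T : finType) (e : rel T) :
  simple_graph e -> minimal_arrows33 e ->
  forall v : T, alpha_nbhd e v + 3 <= deg e v.
Proof.
move=> [e_irr e_sym] e_min v.
have [S /andP [S_sub S_ind] <-] := alpha_nbhd_attained e v.
have := minimal_arrows33_nbhd_indep e_irr e_sym v e_min S_ind.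
rewrite (cardsDS S_sub) /deg; have := subset_leq_card S_sub; lia.
Qed.
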